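(* Let $b$ be a positive integer relatively prime to $6$, let $a\in\{0,1,\dots,b-1\}$, and let $f$ be the multiplicative order of $3/2$ modulo $b$. Then for every positive integer $x$ relatively prime to $3$ there is an admissible vector $s\in\mathcal{E}(x)$ such that $v_s(x)\equiv a\pmod b$, $v_s(x)\not\equiv 0\pmod 3$, and $l(s)\le (b-1)f$.
   Context: Let $T_0^{-1}(x)=2x$ and $T_1^{-1}(x)=(2x-1)/3$, viewed as maps $\mathbb{Q}\to\mathbb{Q}$. For $s=(s_0,s_1,\dots,s_k)$ with $k\ge 0$ and all $s_i$ nonnegative integers, the length of $s$ is $l(s)=k$ and $v_s=T_0^{-s_0}\circ T_1^{-1}\circ T_0^{-s_1}\circ T_1^{-1}\circ\cdots\circ T_1^{-1}\circ T_0^{-s_k}$ (with $k$ occurrences of $T_1^{-1}$). The vector $s$ is admissible for a positive integer $x$ if $v_s(x)$ is a positive integer; $\mathcal{E}(x)$ denotes the set of vectors admissible for $x$. *)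

From HB Require Import structures.
From mathcomp Require Import all_boot all_order all_algebra.
Set Implicit Arguments. Unset Strict Implicit. Unset Printing Implicit Defensive.
Import Order.TTheory GRing.Theory Num.Theory.
Local Open Scope ring_scope.

Definition T0inv (x : rat) : rat := 2 * x.
Definition T1inv (x : rat) : rat := (2 * x - 1) / 3.

(* A vector s = (s_0, ..., s_k) is a nonempty seq nat; its length l(s) = k. *)
Definition is_vec (s : seq nat) : bool := (0 < size s)%N.
Definition len (s : seq nat) : nat := (size s).-1.

Fixpoint vs (s : seq nat) (x : rat) : rat :=
  match s with
  | [::] => x
  | [:: s0] => iter s0 T0inv x
  | s0 :: t => iter s0 T0inv (T1inv (vs t x))
  end.

Definition admissible (x : nat) (s : seq nat) : Prop :=
  is_vec s /\ exists n : nat, (0 < n)%N /\ vs s (x%:R) = (n%:R : rat).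

(* f is the multiplicative order of 3/2 modulo b (b coprime to 6):
   least f > 0 with (3/2)^f = 1 mod b, i.e. 3^f = 2^f mod b. *)
Definition is_order32 (b f : nat) : Prop :=
  (0 < f)%N /\ (3 ^ f = 2 ^ f %[mod b])%N /\
  forall g : nat, (0 < g)%N -> (g < f)%N -> (3 ^ g <> 2 ^ g %[mod b])%N.

From HB Require Import structures.
From mathcomp Require Import all_boot all_order all_algebra.
From mathcomp Require Import ring zify.
From mathcomp Require Import cyclic.
Import GRing.Theory Num.Theory.

(* For s = (d_k, ..., d_1, D) one has v_s(x) = num_k / 3^k, where num_0 = 2^D x
   and num_(j+1) = 2^(d_(j+1)) (2 num_j - 3^j).  Take P divisible by totient b
   and by 2*3^k, so that 2^P = 1 both modulo b and modulo 3^(k+1), and let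
   every d_j be 2P (acting as 1), except at cnt "slots" j = q f where the pair
   of exponents 2P+1, 3P-1 (acting as 2 and 1/2) is used.  Each slot shifts
   num_k / 2^k by a fixed amount modulo b, because (3/2)^(q f) = 1 mod b, and
   by a multiple of 3^f modulo 3^(k+1).  Since 2^k = 3^k mod b, modulo b
   num_k = 3^k (2^D x + shift): cnt is chosen to make this 3^k a.  Modulo
   3^(k+1), D is chosen by a Hensel-type lifting of discrete logarithms of 2
   (without disturbing 2^D mod b) so that num_k = -3^k.  Then n = num_k / 3^k
   is the required value. *)

Lemma dvd3_1_add_2sq (X : nat) : ~~ (3 %| X) -> 3 %| 1 + 2 * X ^ 2.
Proof.
rewrite /dvdn -modnDm -modnMm -modnXm.
have : X %% 3 < 3 by rewrite ltn_mod.
by case: (X %% 3) => [|[|[|]]].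
Qed.

(* 2^(2*3^K) = 1 + 3^(K+1) u with u prime to 3: the order of 2 modulo
   3^(K+2) is exactly 2*3^(K+1). *)
Lemma pow2_pow3 (K : nat) :
  exists u, 2 ^ (2 * 3 ^ K) = 1 + 3 ^ K.+1 * u /\ ~~ (3 %| u).
Proof.
elim: K => [|K [u [hu h3u]]]; first by exists 1.
exists (u + 3 * (3 ^ K * u ^ 2 + 3 ^ (2 * K) * u ^ 3)); split.
  rewrite (_ : 2 * 3 ^ K.+1 = 2 * 3 ^ K * 3); last by rewrite expnS; ring.
  rewrite expnM hu !expnS (mulnC 2 K) expnM.
  by set t := 3 ^ K; ring.
by rewrite dvdn_addl // dvdn_mulr.
Qed.

Lemma pow_1_add_expansion (K u i : nat) :
  exists e, (1 + 3 ^ K * u) ^ i = 1 + 3 ^ K * (i * u + 3 ^ K * e).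
Proof.
elim: i => [|i [e he]]; first by exists 0; rewrite expn0 !mul0n !muln0.
by exists (e + (i * u + 3 ^ K * e) * u); rewrite expnS he; ring.
Qed.

(* Hensel-type lifting of discrete logarithms of 2 modulo powers of 3: a
   solution of y + c = 0 mod 3^(j+1) can be lifted, by multiplying y by a
   power of 2^(2*3^j) (which is 1 mod 3^(j+1)), to a solution mod 3^(K+1). *)
Lemma pow2_dlog_lift (j K y c : nat) : j <= K -> ~~ (3 %| c) ->
  3 ^ j.+1 %| y + c -> exists rho, 3 ^ K.+1 %| (2 ^ (2 * 3 ^ j)) ^ rho * y + c.
Proof.
move=> le_jK c3 hyc; elim: K le_jK => [|K IH] le_jK.
  by exists 0; rewrite expn0 mul1n; move: le_jK hyc; rewrite leqn0 => /eqP ->.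
have [lt_jK | eq_jK] := leqP j K; last first.
  by exists 0; rewrite expn0 mul1n (_ : K.+1 = j) //; lia.
have [rho /dvdnP [r hr]] := IH lt_jK.
set A := (2 ^ (2 * 3 ^ j)) ^ rho * y in hr.
have [u [hu u3]] := pow2_pow3 K.
have A3 : ~~ (3 %| A).
  apply: contra c3 => h3A; rewrite -(dvdn_addr _ h3A) hr.
  by rewrite dvdn_mull // expnS dvdn_mulr.
have Au3 : ~~ (3 %| A * u) by rewrite Euclid_dvdM // negb_or A3 u3.
(* the correction step: raise 2^(2*3^K) = 1 + 3^(K+1) u to the power
   i = 2 r A u, which kills the obstruction r modulo 3. *)
set i := 2 * r * (A * u).
have [e he] := pow_1_add_expansion K.+1 u i.
have gen : (2 ^ (2 * 3 ^ j)) ^ (3 ^ (K - j)) = 1 + 3 ^ K.+1 * u.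
  by rewrite -expnM -mulnA -expnD subnKC.
exists (rho + 3 ^ (K - j) * i).
rewrite expnD [_ ^ (3 ^ (K - j) * i)]expnM gen mulnAC -/A mulnC he.
have -> : (1 + 3 ^ K.+1 * (i * u + 3 ^ K.+1 * e)) * A + c
   = (A + c) + 3 ^ K.+1 * (i * u * A + 3 ^ K.+1 * e * A) by ring.
rewrite hr.
have -> : r * 3 ^ K.+1 + 3 ^ K.+1 * (i * u * A + 3 ^ K.+1 * e * A)
   = 3 ^ K.+1 * (r * (1 + 2 * (A * u) ^ 2) + 3 * (3 ^ K * e * A)).
  by rewrite /i expnS; ring.
rewrite (expnSr 3 K.+1) dvdn_pmul2l ?expn_gt0 //.
by apply: dvdn_add; [apply/dvdn_mull/dvd3_1_add_2sq | apply: dvdn_mulr].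
Qed.

(* Some 2^D0 x is -1 mod 3^(K+1): lift a solution mod 3 (D0 = 0 or 1). *)
Lemma pow2_mul_eq_m1 (K : nat) {x : nat} :
  ~~ (3 %| x) -> exists D0, 3 ^ K.+1 %| 2 ^ D0 * x + 1.
Proof.
move=> x3; pose t := if x %% 3 == 2 then 0 else 1.
have base : 3 ^ 1 %| 2 ^ t * x + 1.
  move: x3; rewrite /t /dvdn -modnDml -modnMm.
  have : x %% 3 < 3 by rewrite ltn_mod.
  by case: (x %% 3) => [|[|[|]]].
have [rho hrho] := pow2_dlog_lift 0 K (2 ^ t * x) 1 (leq0n K) isT base.
by exists (2 * rho + t); move: hrho; rewrite expn0 muln1 -expnM mulnA -expnD.
Qed.

(* Euler's theorem modulo 3^(K+1), whose totient is 2*3^K. *)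
Lemma pow_totient_3pow (n K : nat) : coprime n 3 -> n ^ (2 * 3 ^ K) %% 3 ^ K.+1 = 1.
Proof.
move=> co3; have /eqP := @Euler_exp_totient n (3 ^ K.+1) (coprimeXr _ co3).
by rewrite totient_pfactor // => /eqP ->; rewrite modn_small // (ltn_exp2l 0).
Qed.

(* The 3-part of T is absorbed by the factor 3^(f-1) of the discrete logarithm,
   its prime-to-3 part N by the factor X = N^(2*3^K), which is 1 mod 3^(K+1). *)
Lemma pow2_correction {T K f y : nat} (w : nat) :
  0 < T -> 0 < f -> f <= K.+1 -> logn 3 T < f -> 3 ^ K.+1 %| y + 1 ->
  exists E, T %| E /\ 3 ^ K.+1 %| 2 ^ E * y + (1 + 3 ^ f * w).
Proof.
move=> T_gt0 f_gt0 le_fK lt_vf hy.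
have [N coN eT] := pfactor_coprime (isT : prime 3) T_gt0.
set c := 1 + 3 ^ f * w.
have c3 : ~~ (3 %| c).
  by rewrite dvdn_addl // dvdn_mulr // -(prednK f_gt0) expnS dvdn_mulr.
have hyc : 3 ^ f.-1.+1 %| y + c.
  rewrite prednK // /c addnA dvdn_add ?dvdn_mulr //.
  by apply: dvdn_trans hy; rewrite dvdn_exp2l.
have [|rho hrho] := pow2_dlog_lift f.-1 K y c _ c3 hyc; first by lia.
have [X X1 NX] : exists2 X, X %% 3 ^ K.+1 = 1 & N %| X.
  exists (N ^ (2 * 3 ^ K)); first by rewrite pow_totient_3pow // coprime_sym.
  by rewrite dvdn_exp // muln_gt0 expn_gt0.
have eX : X = 1 + X %/ 3 ^ K.+1 * 3 ^ K.+1 by rewrite {1}(divn_eq X (3 ^ K.+1)) X1 addnC.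
exists (2 * 3 ^ f.-1 * rho * X); split.
  rewrite eT (_ : 2 * 3 ^ f.-1 * rho * X = X * 3 ^ f.-1 * (2 * rho)); last by ring.
  by rewrite dvdn_mulr // dvdn_mul // dvdn_exp2l // -ltnS prednK.
have -> : 2 ^ (2 * 3 ^ f.-1 * rho * X)
    = (2 ^ (2 * 3 ^ f.-1)) ^ rho * (2 ^ (2 * 3 ^ K)) ^ (3 ^ f * rho * (X %/ 3 ^ K.+1)).
  rewrite -!expnM -expnD; congr (2 ^ _).
  by rewrite {1}eX -{3}(prednK f_gt0) !expnS; ring.
rewrite /dvdn -modnDml mulnAC -modnMmr -modnXm pow_totient_3pow // exp1n.
have M_gt1 : 1 < 3 ^ K.+1 by rewrite (ltn_exp2l 0).
by rewrite (modn_small M_gt1) muln1 modnDml.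
Qed.

Lemma iter_T0inv (n : nat) (q : rat) : iter n T0inv q = (2%:R ^+ n * q)%R.
Proof.
elim: n => [|n IH] /=; first by rewrite expr0 mul1r.
by rewrite IH /T0inv exprS mulrA.
Qed.

(* The identity behind one slot: multiplying by mu1 before a step
   z |-> 2 z - 3^j and by its inverse mu2 after it, where t2 = 2^j and
   t3 = 3^j, shifts the running value Z by t3 h (1 - mu2), h = 1/(2 t2). *)
Lemma slot_identity (R : comNzRingType) (mu1 mu2 t2 t3 h Z : R) :
  (mu1 * mu2 = 1)%R -> (2 * t2 * h = 1)%R ->
  (mu2 * (2 * (mu1 * (t2 * Z - t3)) - t3) =
   2 * t2 * (Z + t3 * h * (1 - mu2)) - 3 * t3)%R.
Proof.
move=> e1 e2.
rewrite (_ : (mu2 * _ = 2 * t2 * (Z + t3 * h * (1 - mu2)) - 3 * t3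
   + (mu1 * mu2 - 1) * (2 * t2 * Z - 2 * t3) - (2 * t2 * h - 1) * (t3 * (1 - mu2)))%R);
  last by ring.
by rewrite e1 e2 !subrr !mul0r addr0 subr0.
Qed.

Section Slots.
Variables (f cnt : nat).

Definition slot (j : nat) : bool := (j %% f == 0) && (0 < j %/ f <= cnt).
Definition post_slot (j : nat) : bool := (j %% f == 1) && (0 < j %/ f <= cnt).

Hypothesis f_gt1 : 1 < f.

Lemma slot_next (j : nat) : slot j -> post_slot j.+1 /\ ~~ slot j.+1.
Proof.
rewrite /slot /post_slot => /andP [/eqP hm hq].
set q := j %/ f in hq.
have hj : j = q * f by rewrite {1}(divn_eq j f) hm addn0.
have e1 : j.+1 %% f = 1 by rewrite hj -addn1 modnMDl modn_small.
have e2 : j.+1 %/ f = q by rewrite hj -addn1 divnMDl ?divn_small ?addn0 //; lia.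
by rewrite e1 e2 hq.
Qed.

Lemma post_slot_prev (j : nat) : post_slot j.+1 -> slot j.
Proof.
rewrite /slot /post_slot => /andP [/eqP hm hq].
set q := j.+1 %/ f in hq.
have hj : j.+1 = q * f + 1 by rewrite {1}(divn_eq j.+1 f) hm.
move: hj; rewrite addn1 => -[hj].
by rewrite hj modnMl mulnK ?hq //; lia.
Qed.

Lemma slot0 : ~~ slot 0.
Proof. by rewrite /slot div0n ltnn andbF. Qed.

Fixpoint slots_below (j : nat) : nat :=
  if j is j'.+1 then slots_below j' + slot j' else 0.

Lemma slots_belowE (j : nat) : slots_below j = minn cnt (j.-1 %/ f).
Proof.
have f_gt0 : 0 < f by lia.
elim: j => [|j IH]; first by rewrite /= div0n; lia.
rewrite /= IH; case: j {IH} => [|j]; first by rewrite /= /slot div0n; lia.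
by rewrite /= /slot divnS // /dvdn; case: (j.+1 %% f == 0) => /=; lia.
Qed.

Lemma slots_end (c : nat) :
  cnt <= c -> ~~ slot (c.+1 * f) /\ slots_below (c.+1 * f) = cnt.
Proof.
move=> le_cnt; have f_gt0 : 0 < f by lia.
split.
  by rewrite /slot mulnK //; apply/negP => /andP [_ /andP [_ h]]; lia.
rewrite slots_belowE (_ : (c.+1 * f).-1 = c * f + f.-1); last by rewrite mulSn; lia.
by rewrite divnMDl // divn_small ?addn0; lia.
Qed.

End Slots.

Arguments slot_next {f cnt} f_gt1 {j}.
Arguments post_slot_prev {f cnt} f_gt1 {j}.
Arguments slots_end {f cnt} f_gt1 {c}.

(* With P a large common period of 2 (2^P = 1 modulo
   all moduli of interest), the vector (d_k, ..., d_1, D) has d_j = 2P (acting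
   like 1) except at the "slots" j = q f, 1 <= q <= cnt, and the following
   positions j = q f + 1, where the two exponents 2P+1 (acting like 2) and
   3P-1 (acting like 1/2) are used, in the order given by up_first. *)
Section Construction.
Variables (f cnt P D x : nat) (up_first : bool).
Local Notation slot := (slot f cnt).
Local Notation post_slot := (post_slot f cnt).
Local Notation slots_below := (slots_below f cnt).

Definition up_exp : nat := (2 * P).+1.
Definition down_exp : nat := (3 * P).-1.

Definition dexp (j : nat) : nat :=
  if slot j then (if up_first then up_exp else down_exp)
  else if post_slot j then (if up_first then down_exp else up_exp)
  else 2 * P.

Fixpoint vec (j : nat) : seq nat := if j is j'.+1 then dexp j :: vec j' else [:: D].

(* num j = 3^j v_{vec j}(x), computed by num (j+1) = 2^(d_(j+1)) (2 num j - 3^j). *)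
Fixpoint num (j : nat) : nat :=
  if j is j'.+1 then 2 ^ dexp j * (2 * num j' - 3 ^ j') else 2 ^ D * x.

Hypothesis P_gt0 : 0 < P.

Lemma dexp_ge2 (j : nat) : 2 <= dexp j.
Proof.
rewrite /dexp /up_exp /down_exp.
by case: (slot j); case: (post_slot j); case: up_first; lia.
Qed.

Hypothesis x_gt0 : 0 < x.

(* The recursion never truncates: 3^j <= num j. *)
Lemma num_ge (j : nat) : 3 ^ j <= num j.
Proof.
elim: j => [|j IH] /=; first by rewrite muln_gt0 expn_gt0.
have h4 : 2 ^ 2 <= 2 ^ dexp j.+1 := @leq_pexp2l 2 _ _ isT (dexp_ge2 j.+1).
by rewrite expnS (leq_trans _ (leq_mul h4 (_ : 3 ^ j <= 2 * num j - 3 ^ j))) //; lia.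
Qed.

Lemma size_vec (j : nat) : size (vec j) = j.+1.
Proof. by elim: j => //= j ->. Qed.

Lemma vs_vec (j : nat) : vs (vec j) (x%:R) = ((num j)%:R / (3 ^ j)%:R : rat)%R.
Proof.
elim: j => [|j IH]; first by rewrite /= iter_T0inv expn0 divr1 natrM natrX.
have -> : vs (vec j.+1) x%:R = iter (dexp j.+1) T0inv (T1inv (vs (vec j) x%:R)).
  by case: j {IH}.
rewrite iter_T0inv IH /T1inv /= natrM natrX natrB; last by have := num_ge j; lia.
rewrite natrM !natrX exprS; field.
by rewrite expf_eq0 pnatr_eq0 andbF.
Qed.

Hypothesis f_gt1 : 1 < f.

Section Reduction.
Variable R : comNzRingType.
Local Open Scope ring_scope.
Hypothesis two_P : (2 : R) ^+ P = 1.

Definition half : R := 2 ^+ P.-1.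
Definition mul_slot : R := if up_first then 2 else half.
Definition mul_post : R := if up_first then half else 2.

Lemma half2 : 2 * half = 1.
Proof. by rewrite /half -exprS prednK. Qed.

Lemma mul_slot_post : mul_slot * mul_post = 1.
Proof. by rewrite /mul_slot /mul_post; case: up_first; rewrite ?half2 // mulrC half2. Qed.

Lemma pow2_dexp (j : nat) :
  (2 : R) ^+ dexp j = if slot j then mul_slot else if post_slot j then mul_post else 1.
Proof.
have e0 : (2 : R) ^+ (2 * P) = 1 by rewrite mulnC exprM two_P expr1n.
have eu : (2 : R) ^+ up_exp = 2 by rewrite /up_exp exprS e0 mulr1.
have ed : (2 : R) ^+ down_exp = half.
  have -> : down_exp = (2 * P + P.-1)%N.
    by rewrite /down_exp mulSn addnC -!subn1 addnBA.
  by rewrite exprD e0 mul1r.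
by rewrite /dexp /mul_slot /mul_post; case: ifP => _; case: up_first => //; case: ifP.
Qed.

(* pending j: the factor mul_slot still to be cancelled if j is a slot;
   shift j: the accumulated shift of the running value due to the slots. *)
Definition pending (j : nat) : R := if slot j then mul_slot else 1.
Fixpoint shift (j : nat) : R := if j is j'.+1 then
  shift j' + (if slot j' then 3 ^+ j' * half ^+ j'.+1 * (1 - mul_post) else 0) else 0.

Lemma num_reduction (j : nat) :
  (num j)%:R = pending j * (2 ^+ j * ((2 ^ D * x)%:R + 1 + shift j) - 3 ^+ j).
Proof.
elim: j => [|j IH].
  by rewrite /pending (negbTE (slot0 f cnt)) /= expr0 !mul1r addr0 addrK.
rewrite /= natrM natrB; last by have := num_ge j; lia.
rewrite natrX pow2_dexp natrM natrX IH.
have e2 : (2 : R) ^+ j.+1 * half ^+ j.+1 = 1 by rewrite -exprMn half2 expr1n.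
rewrite /pending; case hA: (slot j).
  have [-> /negbTE ->] := slot_next f_gt1 hA; rewrite mul1r.
  rewrite !exprS; rewrite !exprS in e2; rewrite !addrA.
  exact: slot_identity mul_slot_post e2.
case: (slot j.+1); first by rewrite !exprS !mul1r addr0; ring.
case hB: (post_slot j.+1); first by move: (post_slot_prev f_gt1 hB); rewrite hA.
by rewrite !exprS !mul1r addr0; ring.
Qed.

Lemma shift_3pow (j : nat) : exists w, shift j = 3 ^+ f * w.
Proof.
elim: j => [|j [w IH]] /=; first by exists 0; rewrite mulr0.
case hA: (slot j); last by exists w; rewrite addr0.
have le_fj : (f <= j)%N.
  by move: hA; rewrite /slot => /andP [_ /andP [h _]]; rewrite -divn_gt0 // ltnW.
exists (w + 3 ^+ (j - f) * half ^+ j.+1 * (1 - mul_post)).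
by rewrite IH -{1}(subnKC le_fj) exprD; ring.
Qed.

Lemma shift_count (j : nat) :
  3 ^+ f * half ^+ f = 1 -> shift j = (slots_below j)%:R * (half * (1 - mul_post)).
Proof.
move=> h3; elim: j => [|j IH] /=; first by rewrite mul0r.
rewrite IH natrD; case hA: (slot j); last by rewrite addr0 /= addr0.
move: (hA); rewrite /slot => /andP [/eqP hm _].
have : 3 ^+ j * half ^+ j = 1.
  by rewrite {1 2}(divn_eq j f) hm addn0 mulnC !exprM -exprMn h3 expr1n.
by rewrite exprS => e; rewrite [3 ^+ j * _]mulrCA e mulr1 /=; ring.
Qed.

Lemma num_top (c : nat) : (cnt <= c)%N ->
  (num (c.+1 * f))%:R
  = 2 ^+ (c.+1 * f) * ((2 ^ D * x)%:R + 1 + shift (c.+1 * f)) - 3 ^+ (c.+1 * f).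
Proof.
move=> le_cnt; have [/negbTE not_slot _] := slots_end f_gt1 le_cnt.
by rewrite num_reduction /pending not_slot mul1r.
Qed.

End Reduction.
End Construction.

Arguments half2 {P} P_gt0 {R} two_P.
Arguments shift_count {f cnt P up_first R j}.
Arguments num_top {f cnt P D x up_first} P_gt0 x_gt0 f_gt1 {R} two_P {c}.

Lemma natr_Zp_eq (M n m : nat) : 1 < M -> ((n%:R : 'Z_M) = m%:R)%R <-> n = m %[mod M].
Proof.
move=> M_gt1; split => [h | h]; first by rewrite -!(val_Zp_nat M_gt1) h.
by apply: val_inj; rewrite /= !(val_Zp_nat M_gt1).
Qed.

Lemma natr_Zp_eq0 (M n : nat) : 1 < M -> ((n%:R : 'Z_M) = 0)%R <-> M %| n.
Proof. by move=> M_gt1; rewrite -[0%R]/(0%:R)%R natr_Zp_eq // mod0n; split => /eqP. Qed.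

Lemma totient_leq (n : nat) : totient n <= n.
Proof.
rewrite totient_count_coprime.
apply: (@leq_trans (\sum_(0 <= d < n) 1)); first by apply: leq_sum => i _; apply: leq_b1.
by rewrite sum_nat_const_nat muln1 subn0.
Qed.

(* Consequences of b > 1 being prime to 6 with 3^f = 2^f mod b, f > 0:
   b >= 5, f >= 2, and the 3-adic valuation of totient b is below f
   (as totient b <= b <= 3^f - 2^f). *)
Lemma order32_bounds {b f : nat} : 1 < b -> coprime b 6 -> 0 < f ->
  3 ^ f = 2 ^ f %[mod b] -> [/\ 4 < b, 1 < f & logn 3 (totient b) < f].
Proof.
move=> b_gt1 cop6 f_gt0 e32.
have b_gt4 : 4 < b by move: cop6 b_gt1; case: b {e32} => [|[|[|[|[|b]]]]].
have f_gt1 : 1 < f.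
  by case: f f_gt0 e32 => [|[|f]] // _; rewrite !expn1 !modn_small //; lia.
have lt23 : 2 ^ f < 3 ^ f by rewrite ltn_exp2r //; lia.
have b_lt : b < 3 ^ f.
  have : b %| 3 ^ f - 2 ^ f by rewrite -eqn_mod_dvd ?e32 // ltnW.
  by move/dvdn_leq; rewrite subn_gt0 lt23 => /(_ isT); lia.
split => //; rewrite -(ltn_exp2l _ _ (isT : 1 < 3)).
apply: leq_ltn_trans (dvdn_leq _ (pfactor_dvdnn _ _))
                     (leq_ltn_trans (totient_leq b) b_lt).
by rewrite totient_gt0; lia.
Qed.

(* Choice of the slots modulo b: with h = 1/2, a slot shifts the residue by
   -h (up_first = false) or by h/2 (up_first = true); cnt <= b - 2 slots of one
   kind suffice to move any residue V to any residue a. *)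
Lemma balancing_choice {b : nat} (V : nat) {a P : nat} : 4 < b -> a < b -> 0 < P ->
  ((2 : 'Z_b) ^+ P = 1)%R ->
  exists up_first cnt, cnt <= b - 2 /\
    (V%:R + cnt%:R * (half P 'Z_b * (1 - mul_post P up_first 'Z_b)) = a%:R :> 'Z_b)%R.
Proof.
move=> b_gt4 lt_ab P_gt0 two_P.
have h2 : (2 * half P 'Z_b = 1)%R by apply: half2.
set h := half P 'Z_b in h2 *.
set c0 := (2 * (V + (b - a))) %% b.
have ec0 : (c0%:R = 2 * V%:R - 2 * a%:R :> 'Z_b)%R.
  rewrite Zp_nat_mod ?natrM ?natrD ?natrB; try lia.
  by rewrite pchar_Zp; [ring | lia].
have [c0_max | c0_lt] := eqVneq c0 b.-1.
  exists true, 2; split; first by lia.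
  have hc : (c0%:R + 1 = 0 :> 'Z_b)%R by rewrite c0_max natr1 prednK ?pchar_Zp //; lia.
  rewrite ec0 in hc; rewrite /mul_post -/h.
  apply/eqP; rewrite -subr_eq0; apply/eqP.
  transitivity (h * (2 * V%:R - 2 * a%:R + 1) + (1 - 2 * h) * (V%:R - a%:R + h))%R.
    by ring.
  by rewrite hc h2 subrr mulr0 mul0r addr0.
exists false, c0; split.
  have : c0 < b by rewrite ltn_mod; lia.
  by move: c0_lt; lia.
rewrite ec0 /mul_post -/h; apply/eqP; rewrite -subr_eq0; apply/eqP.
transitivity ((1 - 2 * h) * (V%:R - a%:R))%R; first by ring.
by rewrite h2 subrr mul0r.
Qed.

(* Modulo 3^(k+1): if 2^D x = -(1 + shift) then num k = -3^k, so that the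
   final value num k / 3^k is an integer congruent to -1 mod 3. *)
Lemma num_mod_3pow (f cnt P D x c w : nat) (up_first : bool) :
  let k := c.+1 * f in
  0 < P -> 0 < x -> 1 < f -> cnt <= c -> ((2 : 'Z_(3 ^ k.+1)) ^+ P = 1)%R ->
  shift f cnt P up_first 'Z_(3 ^ k.+1) k = (3 ^+ f * w%:R)%R ->
  3 ^ k.+1 %| 2 ^ D * x + (1 + 3 ^ f * w) ->
  3 ^ k.+1 %| num f cnt P D x up_first k + 3 ^ k.
Proof.
move=> k P_gt0 x_gt0 f_gt1 le_cnt two_P hw hD.
have K_gt1 : 1 < 3 ^ k.+1 by rewrite (ltn_exp2l 0).
move/(natr_Zp_eq0 _ _ K_gt1): hD; rewrite natrD => /eqP; rewrite addr_eq0 => /eqP hD.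
apply/(natr_Zp_eq0 _ _ K_gt1).
rewrite natrD (num_top P_gt0 x_gt0 f_gt1 two_P le_cnt) -/k hw hD.
by rewrite natrD natrM !natrX; ring.
Qed.

Lemma num_mod_b (b a f cnt P D x c : nat) (up_first : bool) :
  let k := c.+1 * f in
  1 < b -> 0 < P -> 0 < x -> 1 < f -> cnt <= c -> ((2 : 'Z_b) ^+ P = 1)%R ->
  3 ^ f = 2 ^ f %[mod b] ->
  ((2 ^ D * x)%:R + cnt%:R * (half P 'Z_b * (1 - mul_post P up_first 'Z_b))
     = a%:R :> 'Z_b)%R ->
  num f cnt P D x up_first k = 3 ^ k * a %[mod b].
Proof.
move=> k b_gt1 P_gt0 x_gt0 f_gt1 le_cnt two_P e32 hDa.
have e32Z : ((3 : 'Z_b) ^+ f = 2 ^+ f)%R by rewrite -!natrX; apply/natr_Zp_eq.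
have h3 : ((3 : 'Z_b) ^+ f * half P 'Z_b ^+ f = 1)%R.
  by rewrite e32Z -exprMn (half2 P_gt0 two_P) expr1n.
have [_ below] := slots_end f_gt1 le_cnt.
apply/(natr_Zp_eq _ _ _ b_gt1).
rewrite (num_top P_gt0 x_gt0 f_gt1 two_P le_cnt) -/k.
rewrite (shift_count h3) below.
rewrite (_ : (_ + 1 + _ = a%:R + 1)%R); last by rewrite -hDa; ring.
have e2k : ((2 : 'Z_b) ^+ k = 3 ^+ k)%R by rewrite /k mulnC !exprM e32Z.
by rewrite e2k natrM natrX; ring.
Qed.

(* P = totient(b) * 2 * 3^k is a period of 2
   modulo b and modulo 3^(k+1).  A first exponent D0 makes 2^D0 x = -1 mod
   3^(k+1); the slots are then chosen to reach a modulo b, and the exponent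
   is finally corrected to D = E + D0 (with totient b | E, so nothing changes
   modulo b) to absorb the shift modulo 3^(k+1). *)
Lemma good_parameters {b a f x : nat} :
  let k := (b - 1) * f in
  4 < b -> coprime b 2 -> a < b -> 1 < f -> logn 3 (totient b) < f ->
  3 ^ f = 2 ^ f %[mod b] -> 0 < x -> ~~ (3 %| x) ->
  exists P D cnt up_first, [/\ 0 < P,
    3 ^ k.+1 %| num f cnt P D x up_first k + 3 ^ k &
    num f cnt P D x up_first k = 3 ^ k * a %[mod b]].
Proof.
move=> k b_gt4 cop2 lt_ab f_gt1 v_lt e32 x_gt0 x3.
have b_gt1 : 1 < b by lia.
have ek : k = (b - 2).+1 * f by rewrite /k; congr (_ * _); lia.
have T_gt0 : 0 < totient b by rewrite totient_gt0; lia.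
set P := totient b * (2 * 3 ^ k).
have P_gt0 : 0 < P by rewrite muln_gt0 T_gt0 muln_gt0 expn_gt0.
have e2T : ((2 : 'Z_b) ^+ totient b = 1)%R.
  rewrite -natrX -[1%R]/(1%:R)%R; apply/natr_Zp_eq => //.
  by apply: Euler_exp_totient; rewrite coprime_sym.
have two_Pb : ((2 : 'Z_b) ^+ P = 1)%R by rewrite /P exprM e2T expr1n.
have two_P3 : ((2 : 'Z_(3 ^ k.+1)) ^+ P = 1)%R.
  rewrite /P mulnC exprM -natrX -[1%R]/(1%:R)%R (_ : _%:R = 1%:R)%R ?expr1n //.
  apply/natr_Zp_eq; first by rewrite (ltn_exp2l 0).
  by rewrite pow_totient_3pow ?modn_small ?(ltn_exp2l 0).
have [D0 hD0] := pow2_mul_eq_m1 k x3.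
have [up_first [cnt [le_cnt hV]]] :=
  balancing_choice (2 ^ D0 * x) b_gt4 lt_ab P_gt0 two_Pb.
have [w hw] : exists w : nat,
    shift f cnt P up_first 'Z_(3 ^ k.+1) k = (3 ^+ f * w%:R)%R.
  have [w ->] := shift_3pow f cnt P up_first f_gt1 'Z_(3 ^ k.+1) k.
  by exists w; rewrite natr_Zp.
have le_fk : f <= k.+1 by apply: leqW; rewrite /k leq_pmull //; lia.
have [E [TE hE]] := pow2_correction w T_gt0 (ltnW f_gt1) le_fk v_lt hD0.
exists P, (E + D0), cnt, up_first; split => //.
  rewrite ek in hw two_P3 hE *.
  apply: num_mod_3pow le_cnt two_P3 hw _ => //.
  by rewrite expnD -mulnA.
rewrite ek; apply: num_mod_b le_cnt two_Pb e32 _ => //.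
case/dvdnP: TE => m ->; rewrite expnD -mulnA natrM natrX mulnC exprM e2T expr1n mul1r.
exact: hV.
Qed.

Lemma quotient_3pow {G k a b : nat} : 1 < b -> coprime b 3 ->
  3 ^ k.+1 %| G + 3 ^ k -> G = 3 ^ k * a %[mod b] ->
  exists2 n, G = n * 3 ^ k & n = a %[mod b] /\ n %% 3 != 0.
Proof.
move=> b_gt1 cop3 hG3 hGb.
have dvdG : 3 ^ k %| G.
  by rewrite -(dvdn_addl _ (dvdnn (3 ^ k))) (dvdn_trans _ hG3) // dvdn_exp2l.
exists (G %/ 3 ^ k); first by rewrite divnK.
move: hG3 hGb; rewrite -{1 2}(divnK dvdG); set n := G %/ 3 ^ k => hG3 hGb; split.
  apply/(natr_Zp_eq _ _ _ b_gt1); move/(natr_Zp_eq _ _ _ b_gt1): hGb.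
  have unit3k : ((3 ^ k)%:R : 'Z_b)%R \is a GRing.unit by rewrite unitZpE // coprimeXr.
  by rewrite !natrM mulrC; apply: (mulrI unit3k).
move: hG3; rewrite -mulSnr expnS dvdn_pmul2r ?expn_gt0 // => h3.
by apply: contraL h3 => h3n; rewrite -[n.+1]addn1 dvdn_addr.
Qed.

Theorem mainTheorem5 (b a f : nat) :
  (0 < b)%N -> coprime b 6 -> (a < b)%N -> is_order32 b f ->
  forall x : nat, (0 < x)%N -> coprime x 3 ->
  exists s : seq nat,
    admissible x s /\
    (exists n : nat, (vs s (x%:R) = (n%:R : rat))%R /\
       (n = a %[mod b])%N /\ (n %% 3 != 0)%N) /\
    (len s <= (b - 1) * f)%N.
Proof.
move=> b_gt0 cop6 lt_ab [f_gt0 [e32 _]] x x_gt0 cop3.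
have x3 : ~~ (3 %| x) by rewrite -prime_coprime // coprime_sym.
have /andP [cop2 cop3b] : coprime b 2 && coprime b 3 by rewrite -coprimeMr.
have [b_gt1 | b_le1] := ltnP 1 b; last first.
  have -> : b = 1 by lia.
  exists [:: 0]; split; first by split => //; exists x.
  by split => //; exists x; rewrite !modn1.
have [b_gt4 f_gt1 v_lt] := order32_bounds b_gt1 cop6 f_gt0 e32.
have [P [D [cnt [up_first [P_gt0 h3 hb]]]]] :=
  good_parameters b_gt4 cop2 lt_ab f_gt1 v_lt e32 x_gt0 x3.
have [n eG [n_a n3]] := quotient_3pow b_gt1 cop3b h3 hb.
have n_gt0 : 0 < n by case: n n3 {eG n_a}.
set s := vec f cnt P D up_first ((b - 1) * f).
have vs_n : (vs s x%:R = n%:R)%R.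
  by rewrite vs_vec // eG natrM mulfK // pnatr_eq0 expn_eq0.
exists s; split; last split; last by rewrite /len size_vec.
  by split; [rewrite /is_vec size_vec | exists n].
by exists n.
Qed.
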